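(* Let $0<\alpha<\beta$ and $t\ge1$. Define $\mathcal{P}_t''$ to be the set of real polynomials $f$ of degree at most $t$ such that $f(0)=0$, $f$ is $t$-equioscillatory on $[0,\alpha]$, and $f(\beta)=1$. Then the problem \[ \min_{f\in\mathcal{P}_t''}\ \max_{\lambda\in[0,\alpha]}|f(\lambda)| \] is solved by \[ f_t^\star(\lambda)=\prod_{s=0}^{t-1}\frac{\lambda-r_{s,t}}{\beta-r_{s,t}},\qquad r_{s,t}:=\alpha\,\frac{\cos\!\big(\frac{\pi(s+1/2)}{t}\big)+\cos\!\big(\frac{\pi}{2t}\big)}{1+\cos\!\big(\frac{\pi}{2t}\big)}; \] that is, $f_t^\star\in\mathcal{P}_t''$ and $\max_{[0,\alpha]}|f_t^\star|\le\max_{[0,\alpha]}|g|$ for every $g\in\mathcal{P}_t''$.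
   Context: A polynomial $f$ is called $t$-equioscillatory on an interval $[a,b]$ if there exist points $a\le\gamma_0<\gamma_1<\dots<\gamma_{t-1}\le b$ such that $|f(\gamma_s)|=\max_{\lambda\in[a,b]}|f(\lambda)|$ for all $0\le s\le t-1$ and $f(\gamma_0)=-f(\gamma_1)=f(\gamma_2)=-f(\gamma_3)=\cdots$. *)

From HB Require Import structures.
From mathcomp Require Import all_boot all_order all_algebra.
From mathcomp Require Import all_classical all_reals.
From mathcomp Require Import topology normedtype trigo.
Set Implicit Arguments. Unset Strict Implicit. Unset Printing Implicit Defensive.
Import Order.TTheory GRing.Theory Num.Theory.
Local Open Scope ring_scope.
Local Open Scope classical_set_scope.

(* max_{lambda in [a,b]} |f(lambda)|, written as the supremum of the image
   (for a <= b and f a polynomial this supremum is attained, i.e. a max). *)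
Definition supnorm (R : realType) (a b : R) (f : {poly R}) : R :=
  sup [set `|f.[x]| | x in [set x : R | a <= x <= b]].

Definition equiosc (R : realType) (t : nat) (a b : R) (f : {poly R}) : Prop :=
  exists gamma : nat -> R,
    [/\ (forall s, (s < t)%N -> a <= gamma s <= b),
        (forall s, (s.+1 < t)%N -> gamma s < gamma s.+1),
        (forall s, (s < t)%N -> `|f.[gamma s]| = supnorm a b f) &
        (forall s, (s < t)%N -> f.[gamma s] = (-1) ^+ s * f.[gamma 0%N])].

Definition Ptpp (R : realType) (t : nat) (alpha beta : R) (f : {poly R}) : Prop :=
  [/\ (size f <= t.+1)%N, f.[0] = 0, equiosc t 0 alpha f & f.[beta] = 1].

Definition rst (R : realType) (alpha : R) (t s : nat) : R :=
  alpha * (cos (pi * (s%:R + 2^-1) / t%:R) + cos (pi / (2 * t%:R)))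
        / (1 + cos (pi / (2 * t%:R))).

Definition fstar (R : realType) (alpha beta : R) (t : nat) : {poly R} :=
  \prod_(s < t) (('X - (rst alpha t s)%:P) * ((beta - rst alpha t s)^-1)%:P).

(* fstar is the Chebyshev polynomial T_t composed with the affine map [scale],
   which sends [0, alpha] onto [- cos (pi / 2t), 1] and 0 to the smallest zero
   of T_t, and normalised by its value at [scale beta] > 1.  Hence
   |fstar| <= 1 / T_t (scale beta) on [0, alpha], with equality and
   alternating signs at the t pulled-back extrema of T_t.  If some g in P_t''
   had a smaller sup norm, fstar - g would change sign between consecutive
   extrema and also vanish at 0 and beta: t + 1 roots for a polynomial of
   degree at most t, so fstar = g, a contradiction. *)

From HB Require Import structures.
From mathcomp Require Import all_boot all_order all_algebra.
From mathcomp Require Import all_classical all_reals.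
From mathcomp Require Import topology normedtype trigo derive.
From mathcomp Require Import ring lra zify.
Import Order.TTheory GRing.Theory Num.Theory.
Import numFieldNormedType.Exports.
Set Implicit Arguments. Unset Strict Implicit.
Local Open Scope ring_scope.

Section Chebyshev.
Variable R : realType.

Fixpoint cheb (n : nat) : {poly R} :=
  match n with
  | 0%N => 1
  | m.+1 => match m with
            | 0%N => 'X
            | k.+1 => 2%:R *: (cheb m * 'X) - cheb k
            end
  end.

Lemma chebSS n : cheb n.+2 = 2%:R *: (cheb n.+1 * 'X) - cheb n.
Proof. by []. Qed.

Lemma cheb_cos n x : (cheb n).[cos x] = cos (n%:R * x).
Proof.
suff : (cheb n).[cos x] = cos (n%:R * x) /\
       (cheb n.+1).[cos x] = cos (n.+1%:R * x) by case.
elim: n => [|n [IH1 IH2]].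
  by rewrite /= hornerX hornerC mul0r cos0 mul1r.
split => //.
rewrite chebSS hornerD hornerN hornerZ hornerMX IH1 IH2.
have -> : n.+2%:R * x = n.+1%:R * x + x by rewrite -addn1 natrD mulrDl mul1r.
have -> : n%:R * x = n.+1%:R * x - x by rewrite -addn1 natrD mulrDl mul1r addrK.
rewrite !cosD cosN sinN; lra.
Qed.

Lemma size_lead_coef_cheb n :
  size (cheb n) = n.+1 /\ lead_coef (cheb n) = 2%:R ^+ n.-1.
Proof.
suff : (size (cheb n) = n.+1 /\ lead_coef (cheb n) = 2%:R ^+ n.-1) /\
       (size (cheb n.+1) = n.+2 /\ lead_coef (cheb n.+1) = 2%:R ^+ n) by case.
elim: n => [|n [[s1 l1] [s2 l2]]].
  by rewrite /= size_poly1 lead_coef1 size_polyX lead_coefX expr0.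
split => //.
have c2 : cheb n.+1 != 0 by rewrite -size_poly_eq0 s2.
have sz : size (2%:R *: (cheb n.+1 * 'X)) = n.+3.
  by rewrite size_scale ?pnatr_eq0 // size_mulX // s2.
rewrite chebSS; split.
  by rewrite size_polyDl sz // size_polyN s1 ltnS leqW.
rewrite lead_coefDl ?size_polyN ?sz ?s1 ?ltnS ?leqW //.
by rewrite lead_coefZ lead_coefMX l2 /= exprS.
Qed.

Lemma abs_cheb_le1 n x : -1 <= x <= 1 -> `|(cheb n).[x]| <= 1.
Proof. by move=> hx; rewrite -(@acosK R x) ?in_itv // cheb_cos cos_max. Qed.

Lemma cheb_cos_extremum n k :
  (0 < n)%N -> (cheb n).[cos (pi * k%:R / n%:R)] = (-1) ^+ k.
Proof.
move=> n0; rewrite cheb_cos.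
have -> : n%:R * (pi * k%:R / n%:R) = 0 + pi *+ k :> R.
  by rewrite -mulr_natr; field; rewrite pnatr_eq0 -lt0n.
by rewrite (alternatingn (@cosDpi R)) cos0 mulr1.
Qed.

Lemma pi_frac_itv (a : R) n : (0 < n)%N -> 0 <= a <= n%:R ->
  pi * a / n%:R \in `[0, pi].
Proof.
move=> n0 /andP[a0 an]; have np : (0 : R) < n%:R by rewrite ltr0n.
rewrite in_itv /= divr_ge0 ?mulr_ge0 ?(ltW (pi_gt0 R)) //=.
by rewrite ler_pdivrMr // ler_wpM2l // ltW // pi_gt0.
Qed.

Lemma cos_pi_frac_lt n (a b : R) : (0 < n)%N -> 0 <= a -> a < b -> b <= n%:R ->
  cos (pi * b / n%:R) < cos (pi * a / n%:R).
Proof.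
move=> n0 a0 ab bn; have np : (0 : R) < n%:R by rewrite ltr0n.
rewrite ltr_cos ?pi_frac_itv ?(ltW (le_lt_trans a0 ab)) ?(ltW (lt_le_trans ab bn)) ?a0 //.
by rewrite ltr_pM2r ?invr_gt0 // ltr_pM2l // pi_gt0.
Qed.

Definition cheb_node (n s : nat) : R := pi * (s%:R + 2^-1) / n%:R.

Lemma cheb_node_itv n s : (s < n)%N -> cheb_node n s \in `[0, pi].
Proof.
move=> sn; apply: pi_frac_itv; first exact: leq_ltn_trans sn.
have : (s.+1%:R : R) <= n%:R by rewrite ler_nat.
by rewrite -natr1 => h; have := ler0n R s; lra.
Qed.

Lemma cheb_node_root n s : (0 < n)%N -> (cheb n).[cos (cheb_node n s)] = 0.
Proof.
move=> n0; rewrite cheb_cos.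
have -> : n%:R * cheb_node n s = 0 + pi / 2 + pi *+ s.
  by rewrite /cheb_node -mulr_natr; field; rewrite pnatr_eq0 -lt0n.
by rewrite (alternatingn (@cosDpi R)) add0r cos_pihalf mulr0.
Qed.

Lemma cheb_prod_nodes n : (0 < n)%N ->
  cheb n = 2%:R ^+ n.-1 *: \prod_(s < n) ('X - (cos (cheb_node n s))%:P).
Proof.
move=> n0; have [sz ld] := size_lead_coef_cheb n.
rewrite -(big_mkord xpredT (fun s => 'X - (cos (cheb_node n s))%:P)).
rewrite /index_iota subn0 -(big_map (fun s => cos (cheb_node n s)) xpredT
  (fun z => 'X - z%:P)) -ld.
apply: all_roots_prod_XsubC; first by rewrite size_map size_iota.
- apply/allP => z /mapP [s]; rewrite mem_iota add0n => /andP[_ hs] ->.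
  by rewrite /root cheb_node_root.
- rewrite uniq_rootsE map_inj_in_uniq ?iota_uniq //.
  move=> i j; rewrite !mem_iota !add0n => /andP[_ hi] /andP[_ hj].
  move/(cos_inj (cheb_node_itv hi) (cheb_node_itv hj)); rewrite /cheb_node.
  have nn : (n%:R : R) != 0 by rewrite pnatr_eq0 -lt0n.
  have pn : pi != 0 :> R by rewrite gt_eqF // pi_gt0.
  move/(mulIf (invr_neq0 nn))/(mulfI pn)/addIr/eqP.
  by rewrite eqr_nat => /eqP.
Qed.

Lemma prod_cheb_nodes n x : (0 < n)%N ->
  \prod_(s < n) (x - cos (cheb_node n s)) = (cheb n).[x] / 2%:R ^+ n.-1.
Proof.
move=> n0; rewrite cheb_prod_nodes // hornerZ horner_prod.
under eq_bigr do rewrite hornerXsubC.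
by rewrite mulrAC divff ?mul1r // expf_neq0 // pnatr_eq0.
Qed.

End Chebyshev.
Arguments cheb {R}.
Arguments cheb_node {R}.

Section Alternation.
Variable R : realType.

Lemma sup_eq_max (S : set R) m : S m -> (forall y, S y -> y <= m) -> sup S = m.
Proof.
move=> Sm ub; apply/le_anti/andP; split; first by apply: ge_sup; [exists m|].
by apply: sup_upper_bound => //; split; [exists m | exists m].
Qed.

Lemma supnorm_ub a b (g : {poly R}) x :
  a <= x <= b -> `|g.[x]| <= supnorm a b g.
Proof.
move=> hx; have ab : a <= b by case/andP: hx => ax xb; exact: le_trans xb.
have cont : continuous (fun y : R => `|g.[y]|).
  by move=> y; apply: continuous_comp; [exact: continuous_horner|exact: norm_continuous].
have [m _ hm] := EVT_max ab (continuous_subspaceT cont).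
apply: sup_upper_bound; last by exists x.
split; first by exists `|g.[x]|, x.
by exists `|g.[m]| => _ [y hy <-]; apply: hm; rewrite in_itv.
Qed.

Lemma root_between (h : {poly R}) a b : a < b -> h.[a] * h.[b] < 0 ->
  exists2 r, a < r < b & root h r.
Proof.
move=> ab hab.
have min_max0 : Num.min h.[a] h.[b] <= 0 <= Num.max h.[a] h.[b].
  by rewrite ge_min le_max; case: (lerP h.[a] 0) => ha; case: (lerP h.[b] 0) => hb;
    rewrite ?ha ?hb ?(ltW ha) ?(ltW hb) ?orbT //; exfalso; nra.
have cont : continuous (horner h) by move=> y; exact: continuous_horner.
have [r] := IVT (ltW ab) (continuous_subspaceT cont) min_max0.
rewrite in_itv /= => /andP[ar rb] hr; exists r; last exact/eqP.
rewrite !lt_neqAle ar rb !andbT; apply/andP; split; apply/eqP => e.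
  by move: hab; rewrite e hr mul0r ltxx.
by move: hab; rewrite -e hr mulr0 ltxx.
Qed.

Lemma sign_changes_roots (h : {poly R}) (gam : nat -> R) n :
  (forall i j, (i < j < n)%N -> gam i < gam j) ->
  (forall s, (s.+1 < n)%N -> h.[gam s] * h.[gam s.+1] < 0) ->
  exists rs : seq R, [/\ size rs = n.-1, uniq rs, all (root h) rs &
                         all (fun r => gam 0%N < r < gam n.-1) rs].
Proof.
move=> gam_inc sgn.
have roots s : exists r, (s.+1 < n)%N -> gam s < r < gam s.+1 /\ root h r.
  case: (ltnP s.+1 n) => sn; last by exists 0.
  have [r ? ?] := root_between (gam_inc s s.+1 (ltac:(lia))) (sgn s sn).
  by exists r.
have [rho rhoP] := choice roots.
have gam_le i j : (i <= j < n)%N -> gam i <= gam j.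
  by case/andP; rewrite leq_eqVlt => /orP[/eqP-> //|ij jn]; apply/ltW/gam_inc/andP.
exists (map rho (iota 0 n.-1)); split.
- by rewrite size_map size_iota.
- rewrite map_inj_in_uniq ?iota_uniq // => i j; rewrite !mem_iota !add0n.
  move=> /andP[_ i_n] /andP[_ j_n] eq_ij.
  have rho_lt k l : (k < l)%N -> (l < n.-1)%N -> rho k < rho l.
    move=> kl ln; have [/andP[_ rk] _] := rhoP k (ltac:(lia)).
    have [/andP[rl _] _] := rhoP l (ltac:(lia)).
    apply: (lt_le_trans rk); apply: le_trans (ltW rl); apply: gam_le; lia.
  case: (ltngtP i j) => [ij|ji|//].
    by have := rho_lt _ _ ij j_n; rewrite eq_ij ltxx.
  by have := rho_lt _ _ ji i_n; rewrite eq_ij ltxx.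
- by apply/allP => z /mapP[i]; rewrite mem_iota add0n => /andP[_ i_n] ->;
    exact: (rhoP i (ltac:(lia))).2.
- apply/allP => z /mapP[i]; rewrite mem_iota add0n => /andP[_ i_n] ->.
  have [/andP[gr rg] _] := rhoP i (ltac:(lia)).
  rewrite (le_lt_trans _ gr) ?(lt_le_trans rg) //; apply: gam_le; lia.
Qed.

Lemma poly_eq_of_alternation (f g : {poly R}) (gam : nat -> R) n a b :
  (size (f - g)%R <= n.+1)%N ->
  (forall i j, (i < j < n)%N -> gam i < gam j) ->
  a < gam 0%N -> gam n.-1 < b -> f.[a] = g.[a] -> f.[b] = g.[b] ->
  (forall s, (s < n)%N -> `|g.[gam s]| < `|f.[gam s]|) ->
  (forall s, (s.+1 < n)%N -> f.[gam s] * f.[gam s.+1] < 0) ->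
  f = g.
Proof.
move=> size_fg gam_inc a_lt b_gt fga fgb dom alt.
set h := f - g.
have f_h_gt0 s : (s < n)%N -> 0 < f.[gam s] * h.[gam s].
  move=> sn; have lt := dom s sn.
  have f_pos : 0 < `|f.[gam s]| by apply: le_lt_trans lt.
  rewrite hornerD hornerN mulrBr subr_gt0 -expr2 -real_normK ?num_real // expr2.
  by apply: le_lt_trans (ler_norm _) _; rewrite normrM ltr_pM2l.
have [rs [size_rs uniq_rs roots_rs in_rs]] : exists rs : seq R,
    [/\ size rs = n.-1, uniq rs, all (root h) rs &
        all (fun r => gam 0%N < r < gam n.-1) rs].
  apply: (sign_changes_roots gam_inc) => k kn.
  have := alt k kn; have := f_h_gt0 k (ltnW kn); have := f_h_gt0 k.+1 kn; nra.
apply/eqP; rewrite -subr_eq0 -/h; apply/eqP.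
apply: (@roots_geq_poly_eq0 _ _ [:: a, b & rs]).
- have root_h x : f.[x] = g.[x] -> root h x by rewrite /root /h !hornerE => ->; rewrite subrr.
  by rewrite /= roots_rs root_h ?root_h.
- have gam_le : gam 0%N <= gam n.-1.
    by case: (posnP n.-1) => [->//|n1]; apply/ltW/gam_inc; lia.
  rewrite /= uniq_rs !inE !andbT negb_or -andbA; apply/and3P; split.
  + by rewrite lt_eqF // (lt_trans a_lt) // (le_lt_trans gam_le).
  + by apply/negP => /(allP in_rs) /andP[/(lt_trans a_lt)]; rewrite ltxx.
  + by apply/negP => /(allP in_rs) /andP[_ /lt_trans/(_ b_gt)]; rewrite ltxx.
- by rewrite /= size_rs; apply: leq_trans size_fg _; lia.
Qed.

End Alternation.

Lemma sign_mul_self (R : pzRingType) k : (-1) ^+ k * (-1) ^+ k = 1 :> R.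
Proof. by rewrite -exprD addnn -mul2n exprM sqrrN expr1n expr1n. Qed.

Section ShiftedChebyshev.
Variables (R : realType) (alpha beta : R) (t : nat).
Hypotheses (alpha_gt0 : 0 < alpha) (alpha_lt_beta : alpha < beta) (t_gt0 : (0 < t)%N).

Local Notation c := (cos (pi / (2 * t%:R)) : R).
Local Notation K := (alpha / (1 + c)).

Definition scale (l : R) : R := l / K - c.
Definition unscale (x : R) : R := K * (x + c).

Lemma cos_last_cheb_node : cos (cheb_node t t.-1) = - c.
Proof.
have -> : cheb_node t t.-1 = pi - pi / (2 * t%:R) :> R.
  have tt : t%:R = t.-1%:R + 1 :> R by rewrite natr1 prednK.
  by rewrite /cheb_node tt; field; rewrite -tt pnatr_eq0 -lt0n.
by rewrite cosB cospi sinpi mul0r addr0 mulN1r.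
Qed.

Lemma c_ge0 : 0 <= c.
Proof.
have t1 : (1 : R) <= t%:R by rewrite ler1n.
have pp := pi_gt0 R.
have x0 : 0 <= pi / (2 * t%:R) :> R by rewrite divr_ge0 ?mulr_ge0 ?ltW // ?(lt_le_trans ltr01).
have x1 : pi / (2 * t%:R) <= pi / 2 :> R.
  by rewrite invfM mulrA ler_pdivrMr ?(lt_le_trans ltr01) // ler_peMr // divr_ge0 // ltW.
by apply: cos_ge0_pihalf; lra.
Qed.

Lemma K_gt0 : 0 < K.
Proof. by rewrite divr_gt0 // ltr_wpDr ?c_ge0. Qed.

Lemma scaleK : cancel scale unscale.
Proof. by move=> l; rewrite /scale /unscale subrK mulrC divfK // gt_eqF // K_gt0. Qed.

Lemma unscaleK : cancel unscale scale.
Proof.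
by move=> x; rewrite /scale /unscale mulrAC divff ?mul1r ?addrK // gt_eqF // K_gt0.
Qed.

Lemma ler_unscale : {mono unscale : x y / x <= y}.
Proof. by move=> x y; rewrite /unscale ler_pM2l ?K_gt0 // lerD2r. Qed.

Lemma ltr_unscale : {mono unscale : x y / x < y}.
Proof. by move=> x y; rewrite /unscale ltr_pM2l ?K_gt0 // ltrD2r. Qed.

Lemma unscaleN : unscale (- c) = 0.
Proof. by rewrite /unscale addNr mulr0. Qed.

Lemma unscale1 : unscale 1 = alpha.
Proof. by rewrite /unscale divfK // gt_eqF // ltr_wpDr ?c_ge0. Qed.

Lemma scale_itv l : 0 <= l <= alpha -> -1 <= scale l <= 1.
Proof.
rewrite -{1}unscaleN -unscale1 -{1 2}(scaleK l) !ler_unscale => /andP[cl ->].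
by rewrite andbT (le_trans _ cl) // lerN2 cos_le1.
Qed.

Lemma scale_beta_gt1 : 1 < scale beta.
Proof. by rewrite -ltr_unscale scaleK unscale1. Qed.

Lemma rst_unscale s : rst alpha t s = unscale (cos (cheb_node t s)).
Proof. by rewrite /rst /unscale /cheb_node mulrAC. Qed.

Definition cheb_beta : R := (cheb t).[scale beta].

Lemma prod_scale_beta_gt0 : 0 < \prod_(s < t) (scale beta - cos (cheb_node t s)).
Proof.
by apply: prodr_gt0 => s _; rewrite subr_gt0 (le_lt_trans (cos_le1 _) scale_beta_gt1).
Qed.

Lemma cheb_beta_gt0 : 0 < cheb_beta.
Proof.
have := prod_scale_beta_gt0; rewrite prod_cheb_nodes // pmulr_lgt0 //.
by rewrite invr_gt0 exprn_gt0 // ltr0n.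
Qed.

Lemma horner_fstar l : (fstar alpha beta t).[l] = (cheb t).[scale l] / cheb_beta.
Proof.
have prod_scale x : \prod_(s < t) (x - rst alpha t s) =
    K ^+ t * \prod_(s < t) (scale x - cos (cheb_node t s)).
  rewrite -[X in K ^+ X]card_ord -prodr_const -big_split /=; apply: eq_bigr => s _.
  by rewrite rst_unscale -{1}(scaleK x) /unscale -mulrBr opprD addrACA subrr addr0.
rewrite /fstar horner_prod.
under eq_bigr do rewrite hornerM hornerXsubC hornerC.
rewrite big_split /= prodfV prod_scale prod_scale !prod_cheb_nodes // /cheb_beta.
have Kt : K ^+ t != 0 by rewrite expf_neq0 // gt_eqF // K_gt0.
have two : (2%:R ^+ t.-1 : R) != 0 by rewrite expf_neq0 // pnatr_eq0.
by field; rewrite Kt two gt_eqF ?cheb_beta_gt0.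
Qed.

Lemma cheb_beta_neq0 : cheb_beta != 0.
Proof. by rewrite gt_eqF // cheb_beta_gt0. Qed.

Lemma fstar_beta : (fstar alpha beta t).[beta] = 1.
Proof. by rewrite horner_fstar divff // cheb_beta_neq0. Qed.

Lemma fstar0 : (fstar alpha beta t).[0] = 0.
Proof.
by rewrite horner_fstar {1}/scale mul0r sub0r -cos_last_cheb_node cheb_node_root // mul0r.
Qed.

Lemma size_fstar : (size (fstar alpha beta t) <= t.+1)%N.
Proof.
rewrite /fstar big_split /= -(rmorph_prod (@polyC R)).
apply: leq_trans (size_polyMleq _ _) _.
rewrite size_prod_XsubC.
have -> : size (index_enum 'I_t) = t by rewrite -[RHS]card_ord cardT enumT.
by rewrite addSn /= -addn1 leq_add2l size_polyC_leq1.
Qed.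

Lemma abs_fstar_le l : 0 <= l <= alpha -> `|(fstar alpha beta t).[l]| <= cheb_beta^-1.
Proof.
move=> hl; rewrite horner_fstar normrM normfV (gtr0_norm cheb_beta_gt0).
by rewrite ler_piMl ?invr_ge0 ?(ltW cheb_beta_gt0) // abs_cheb_le1 // scale_itv.
Qed.

(* The extrema of cheb t, pulled back; [t.-1 - s] makes them increase with s. *)
Definition extremum (s : nat) : R := unscale (cos (pi * (t.-1 - s)%:R / t%:R)).

Lemma extremum_lt i j : (i < j < t)%N -> extremum i < extremum j.
Proof.
move=> /andP[ij jt]; rewrite ltr_unscale cos_pi_frac_lt ?ler0n ?ltr_nat ?ler_nat //; lia.
Qed.

Lemma extremum_gt0 s : 0 < extremum s.
Proof.
rewrite -unscaleN -cos_last_cheb_node ltr_unscale /cheb_node.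
have ts : ((t.-1 - s)%:R : R) <= t.-1%:R by rewrite ler_nat leq_subr.
have tt : t%:R = t.-1%:R + 1 :> R by rewrite natr1 prednK.
by rewrite cos_pi_frac_lt ?ler0n // ?tt; lra.
Qed.

Lemma extremum_le s : extremum s <= alpha.
Proof. by rewrite -unscale1 ler_unscale cos_le1. Qed.

Lemma extremum_itv s : 0 <= extremum s <= alpha.
Proof. by rewrite (ltW (extremum_gt0 _)) extremum_le. Qed.

Lemma horner_fstar_extremum s :
  (fstar alpha beta t).[extremum s] = (-1) ^+ (t.-1 - s) / cheb_beta.
Proof. by rewrite horner_fstar unscaleK cheb_cos_extremum. Qed.

Lemma abs_horner_fstar_extremum s :
  `|(fstar alpha beta t).[extremum s]| = cheb_beta^-1.
Proof.
by rewrite horner_fstar_extremum normrM normr_sign mul1r normfV gtr0_norm ?cheb_beta_gt0.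
Qed.

Lemma supnorm_fstar : supnorm 0 alpha (fstar alpha beta t) = cheb_beta^-1.
Proof.
apply: sup_eq_max => [|_ [l hl <-]]; last exact: abs_fstar_le.
by exists (extremum 0); [exact: extremum_itv | exact: abs_horner_fstar_extremum].
Qed.

Lemma fstar_equiosc : equiosc t 0 alpha (fstar alpha beta t).
Proof.
exists extremum; split.
- by move=> s _; exact: extremum_itv.
- by move=> s st; apply: extremum_lt; rewrite ltnSn.
- by move=> s _; rewrite supnorm_fstar abs_horner_fstar_extremum.
- move=> s st; rewrite !horner_fstar_extremum subn0.
  have sl : (s <= t.-1)%N by rewrite -ltnS prednK.
  rewrite -{2}(subnK sl) exprD.
  have -> : (-1) ^+ s * ((-1) ^+ (t.-1 - s) * (-1) ^+ s / cheb_beta) =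
            ((-1) ^+ s * (-1) ^+ s) * ((-1) ^+ (t.-1 - s) / cheb_beta) :> R by ring.
  by rewrite sign_mul_self mul1r.
Qed.

Lemma fstar_Ptpp : Ptpp t alpha beta (fstar alpha beta t).
Proof. split; [exact: size_fstar | exact: fstar0 | exact: fstar_equiosc | exact: fstar_beta]. Qed.

Lemma supnorm_fstar_le g : Ptpp t alpha beta g ->
  supnorm 0 alpha (fstar alpha beta t) <= supnorm 0 alpha g.
Proof.
case=> size_g g0 _ g_beta; rewrite leNgt; apply/negP => g_lt.
suff fstar_eq_g : fstar alpha beta t = g by rewrite fstar_eq_g ltxx in g_lt.
apply: (@poly_eq_of_alternation _ _ _ extremum t 0 beta).
- by apply: leq_trans (size_polyD _ _) _; rewrite size_polyN geq_max size_fstar.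
- exact: extremum_lt.
- exact: extremum_gt0.
- exact: le_lt_trans (extremum_le _) alpha_lt_beta.
- by rewrite fstar0 g0.
- by rewrite fstar_beta g_beta.
- move=> s _; rewrite abs_horner_fstar_extremum -supnorm_fstar.
  exact: le_lt_trans (supnorm_ub _ (extremum_itv s)) g_lt.
- move=> s st; rewrite !horner_fstar_extremum.
  have -> : (t.-1 - s = (t.-1 - s.+1).+1)%N by lia.
  set e : R := (-1) ^+ (t.-1 - s.+1).
  have -> : (-1) ^+ (t.-1 - s.+1).+1 / cheb_beta * (e / cheb_beta) =
            - ((e * e) * (cheb_beta^-1 * cheb_beta^-1)) by rewrite exprS -/e; ring.
  by rewrite sign_mul_self oppr_lt0 mul1r mulr_gt0 // invr_gt0 cheb_beta_gt0.
Qed.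

End ShiftedChebyshev.

Theorem lemma4 (R : realType) (alpha beta : R) (t : nat)
  (h0 : 0 < alpha) (hab : alpha < beta) (ht : (1 <= t)%N) :
  Ptpp t alpha beta (fstar alpha beta t) /\
  (forall g : {poly R}, Ptpp t alpha beta g ->
     supnorm 0 alpha (fstar alpha beta t) <= supnorm 0 alpha g).
Proof. by split; [exact: fstar_Ptpp | exact: supnorm_fstar_le]. Qed.
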